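(* Let $T$ be an expanding Markov map with a finite partition, $x\in[0,1]$ and $\kappa>0$. Then $\{y\in[0,1]:\overline R(x,y)>1/\kappa\}\subset\mathcal B^\kappa(x)\subset\{y\in[0,1]:\overline R(x,y)\ge1/\kappa\}$ and $\{y\in[0,1]:\overline R(x,y)<1/\kappa\}\subset\mathcal U^\kappa(x)\subset\{y\in[0,1]:\overline R(x,y)\le1/\kappa\}$.
   Context: An expanding Markov map with a finite partition is a map $T:[0,1]\to[0,1]$ for which there are points $0=a_0<\dots<a_Q=1$, with $I(i)=(a_i,a_{i+1})$, such that: (1) there are $n_0\in\mathbb N$, $\rho>1$ with $|(T^{n_0})'|\ge\rho$; (2) $T$ is strictly monotonic on each $I(i)$ and extends to a $C^2$ function on each $\overline{I(i)}$; (3) if $I(j)\cap T(I(k))\ne\emptyset$ then $I(j)\subset T(I(k))$; (4) there is $R$ with $I(j)\subset\bigcup_{n=1}^RT^n(I(k))$ for all $j,k$; (5) for every $k$, $\sup_{(x,y,z)\in I(k)^3}|T''(x)|/(|T'(y)||T'(z)|)<\infty$. $B(z,r)$ is the open ball. $\mathcal U^\kappa(x)=\bigcup_{i\ge1}\bigcap_{N\ge i}\bigcup_{n=1}^NB(T^nx,N^{-\kappa})$, $\mathcal B^\kappa(x)=[0,1]\setminus\mathcal U^\kappa(x)$. Hitting time: $\tau_r(x,y)=\inf\{n\ge1:T^nx\in B(y,r)\}$, and $\overline R(x,y)=\limsup_{r\to0}\frac{\log\tau_r(x,y)}{-\log r}$, with the convention that if $\{T^nx:n\ge1\}\cap B(y,r)=\emptyset$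 for some $r>0$ then $\tau_r(x,y)=\infty$ and $\overline R(x,y)=\infty$. *)

From Stdlib Require Import Reals Lra.
From Stdlib Require Import ClassicalDescription.
From Coquelicot Require Import Coquelicot.
Open Scope R_scope.

Definition iterT (T : R -> R) (n : nat) (t : R) : R := Nat.iter n T t.

Definition Iint (a : nat -> R) (i : nat) (t : R) : Prop := a i < t < a (S i).

(* g is C^2 on R (equivalent to having a C^2 extension on a closed interval) *)
Definition C2 (g : R -> R) : Prop :=
  (forall t, ex_derive g t) /\ (forall t, ex_derive (Derive g) t) /\
  (forall t, continuous (Derive_n g 2) t).

Definition strictly_monotone_on (P : R -> Prop) (f : R -> R) : Prop :=
  (forall s t, P s -> P t -> s < t -> f s < f t) \/
  (forall s t, P s -> P t -> s < t -> f t < f s).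

Definition expanding_markov (T : R -> R) : Prop :=
  (forall t, 0 <= t <= 1 -> 0 <= T t <= 1) /\
  exists (Q : nat) (a : nat -> R),
    (1 <= Q)%nat /\ a 0%nat = 0 /\ a Q = 1 /\
    (forall i, (i < Q)%nat -> a i < a (S i)) /\
    (* (1) expansion: |(T^n0)'| >= rho wherever T^n0 is defined (orbit in the open intervals) *)
    (exists (n0 : nat) (rho : R), 1 < rho /\
       forall t, 0 <= t <= 1 ->
         (forall k, (k < n0)%nat -> exists i, (i < Q)%nat /\ Iint a i (iterT T k t)) ->
         rho <= Rabs (Derive (fun s => iterT T n0 s) t)) /\
    (forall i, (i < Q)%nat ->
       strictly_monotone_on (Iint a i) T /\
       exists g : R -> R, C2 g /\ forall t, Iint a i t -> g t = T t) /\
    (forall j k, (j < Q)%nat -> (k < Q)%nat ->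
       (exists s, Iint a k s /\ Iint a j (T s)) ->
       forall t, Iint a j t -> exists s, Iint a k s /\ T s = t) /\
    (exists Rn : nat, forall j k, (j < Q)%nat -> (k < Q)%nat ->
       forall t, Iint a j t ->
         exists (n : nat) (s : R), (1 <= n <= Rn)%nat /\ Iint a k s /\ iterT T n s = t) /\
    (forall k, (k < Q)%nat -> exists M : R,
       forall u v w, Iint a k u -> Iint a k v -> Iint a k w ->
         Rabs (Derive_n T 2 u) <= M * Rabs (Derive T v) * Rabs (Derive T w)).

Definition inB (z r y : R) : Prop := Rabs (y - z) < r.

Definition Uk (T : R -> R) (kappa x y : R) : Prop :=
  0 <= y <= 1 /\
  exists i : nat, (1 <= i)%nat /\
    forall N : nat, (i <= N)%nat ->
      exists n : nat, (1 <= n <= N)%nat /\ inB (iterT T n x) (Rpower (INR N) (- kappa)) y.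

Definition Bk (T : R -> R) (kappa x y : R) : Prop :=
  0 <= y <= 1 /\ ~ Uk T kappa x y.

(* hitting time tau_r(x,y) in Rbar (p_infty if never hit) *)
Definition hits (T : R -> R) (x y r : R) (n : nat) : Prop :=
  (1 <= n)%nat /\ inB y r (iterT T n x).

Definition tau (T : R -> R) (x y r : R) : Rbar :=
  Rbar_glb (fun v => exists n, hits T x y r n /\ v = Finite (INR n)).

Definition ratio (T : R -> R) (x y r : R) : Rbar :=
  match tau T x y r with
  | Finite t => Finite (ln t / (- ln r))
  | _ => p_infty
  end.

Definition limsup_0 (f : R -> Rbar) : Rbar :=
  Rbar_glb (fun v => exists delta, 0 < delta /\
     v = Rbar_lub (fun w => exists r, 0 < r < delta /\ w = f r)).

Definition Rbar_up (T : R -> R) (x y : R) : Rbar :=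
  if excluded_middle_informative (exists r, 0 < r /\ forall n, ~ hits T x y r n)
  then p_infty
  else limsup_0 (ratio T x y).

From Stdlib Require Import Reals Lra Lia Classical ClassicalDescription.
From Coquelicot Require Import Coquelicot.
Open Scope R_scope.

(* If y is in U^kappa(x), then for small r and N the
   first integer above r^(-1/kappa), y lies within N^-kappa < r of some T^n x with
   n <= N, so tau_r <= 2 r^(-1/kappa) and log tau_r / (-log r) <= 1/kappa + log 2 / (-log r).
   Conversely, if the limsup is below 1/kappa, then tau_r <= r^(-c) for some c < 1/kappa
   and all small r; at r = N^-kappa this gives a hit before time N^(c kappa) < N. *)

Lemma Rbar_glb_is_glb (E : Rbar -> Prop) : Rbar_is_glb E (Rbar_glb E).
Proof. exact (proj2_sig (Rbar_ex_glb E)). Qed.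

Lemma Rbar_lub_is_lub (E : Rbar -> Prop) : Rbar_is_lub E (Rbar_lub E).
Proof. exact (proj2_sig (Rbar_ex_lub E)). Qed.

Lemma Rbar_glb_lt (E : Rbar -> Prop) (c : Rbar) :
  Rbar_lt (Rbar_glb E) c -> exists v, E v /\ Rbar_lt v c.
Proof.
  intros Hlt; apply NNPP; intros Hnone.
  apply (Rbar_lt_not_le _ _ Hlt), (proj2 (Rbar_glb_is_glb E)).
  intros v Hv; apply Rbar_not_lt_le; intros Hvc; apply Hnone; eauto.
Qed.

Lemma Rbar_le_of_le_plus_eps (x : Rbar) (c : R) :
  (forall eps, 0 < eps -> Rbar_le x (Finite (c + eps))) -> Rbar_le x (Finite c).
Proof.
  intros H; destruct x as [g| |]; simpl.
  - apply Rnot_lt_le; intros Hcg.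
    specialize (H ((g - c) / 2)); simpl in H; lra.
  - apply (H 1); lra.
  - exact I.
Qed.

Lemma limsup_0_le (f : R -> Rbar) (c : R) :
  (forall eps, 0 < eps -> exists d, 0 < d /\
     forall r, 0 < r < d -> Rbar_le (f r) (Finite (c + eps))) ->
  Rbar_le (limsup_0 f) (Finite c).
Proof.
  intros H; apply Rbar_le_of_le_plus_eps; intros eps Heps.
  destruct (H eps Heps) as [d [Hd Hf]].
  eapply Rbar_le_trans.
  - apply (proj1 (Rbar_glb_is_glb _)); exists d; split; [exact Hd | reflexivity].
  - apply (proj2 (Rbar_lub_is_lub _)); intros w [r [Hr ->]]; exact (Hf r Hr).
Qed.

Lemma limsup_0_lt (f : R -> Rbar) (c : R) :
  Rbar_lt (limsup_0 f) (Finite c) ->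
  exists c' d, c' < c /\ 0 < d /\ forall r, 0 < r < d -> Rbar_le (f r) (Finite c').
Proof.
  intros Hlt; destruct (Rbar_glb_lt _ _ Hlt) as [v [[d [Hd ->]] Hv]].
  destruct (Rbar_lub_is_lub (fun w => exists r, 0 < r < d /\ w = f r)) as [Hub _].
  assert (Hfr : forall r, 0 < r < d ->
            Rbar_le (f r) (Rbar_lub (fun w => exists r, 0 < r < d /\ w = f r)))
    by (intros r Hr; apply Hub; eauto).
  destruct (Rbar_lub _) as [l| |]; simpl in Hv; try contradiction.
  - exists l, d; auto.
  - exists (c - 1), d; repeat split; [lra | exact Hd |].
    intros r Hr; specialize (Hfr r Hr); destruct (f r); simpl in *; tauto.
Qed.

Lemma ln_le_iff (a b : R) : 0 < a -> 0 < b -> (ln a <= ln b <-> a <= b).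
Proof.
  intros Ha Hb; split.
  - intros Hle; apply Rnot_lt_le; intros Hba.
    pose proof (ln_increasing b a Hb Hba); lra.
  - now apply ln_le.
Qed.

Lemma Rpower_gt_0 (x y : R) : 0 < Rpower x y.
Proof. apply exp_pos. Qed.

Lemma Rpower_opp_le (a b k : R) : 0 <= k -> 0 < a <= b -> Rpower b (- k) <= Rpower a (- k).
Proof.
  intros Hk Hab; rewrite !Rpower_Ropp.
  apply Rinv_le_contravar; [apply Rpower_gt_0 | now apply Rle_Rpower_l].
Qed.

Lemma Rpower_opp_lt (a b k : R) : 0 < k -> 0 < a < b -> Rpower b (- k) < Rpower a (- k).
Proof.
  intros Hk Hab; rewrite !Rpower_Ropp.
  apply Rinv_lt_contravar;
    [apply Rmult_lt_0_compat; apply Rpower_gt_0 | now apply Rlt_Rpower_l].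
Qed.

Lemma Rpower_root_opp (r k : R) : 0 < r -> 0 < k -> Rpower (Rpower r (- (1 / k))) (- k) = r.
Proof.
  intros Hr Hk; rewrite Rpower_mult.
  replace (- (1 / k) * - k) with 1 by (field; lra).
  now apply Rpower_1.
Qed.

Lemma exists_nat_between (A : R) : 0 <= A -> exists N : nat, A < INR N <= A + 1.
Proof.
  intros HA; destruct (nfloor_ex A HA) as [n Hn].
  exists (S n); rewrite S_INR; lra.
Qed.

Section Hitting.

Variables (T : R -> R) (x y : R).

Lemma hits_mono (r r' : R) (n : nat) : r <= r' -> hits T x y r n -> hits T x y r' n.
Proof. unfold hits, inB; intros Hr [Hn Hin]; split; [exact Hn | lra]. Qed.

Lemma tau_ge_1 (r : R) : Rbar_le (Finite 1) (tau T x y r).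
Proof.
  apply (proj2 (Rbar_glb_is_glb _)); intros v [n [[Hn _] ->]]; simpl.
  now apply (le_INR 1).
Qed.

Lemma tau_le_hits (r : R) (n : nat) : hits T x y r n -> Rbar_le (tau T x y r) (Finite (INR n)).
Proof. intros Hn; apply (proj1 (Rbar_glb_is_glb _)); eauto. Qed.

Lemma tau_lt_hits (r M : R) :
  Rbar_lt (tau T x y r) (Finite M) -> exists n, hits T x y r n /\ INR n < M.
Proof.
  intros Hlt; destruct (Rbar_glb_lt _ _ Hlt) as [v [[n [Hn ->]] Hv]]; eauto.
Qed.

Lemma ratio_le_iff (r c : R) : 0 < r < 1 ->
  (Rbar_le (ratio T x y r) (Finite c) <-> Rbar_le (tau T x y r) (Finite (Rpower r (- c)))).
Proof.
  intros Hr; assert (Hlnr : ln r < 0) by (rewrite <- ln_1; apply ln_increasing; lra).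
  unfold ratio; pose proof (tau_ge_1 r) as Ht1.
  destruct (tau T x y r) as [t| |]; simpl in *; try tauto.
  rewrite Rle_div_l by lra.
  rewrite <- (ln_le_iff t) by (lra || apply Rpower_gt_0).
  rewrite ln_Rpower; split; lra.
Qed.

Lemma Rbar_up_ge_limsup : Rbar_le (limsup_0 (ratio T x y)) (Rbar_up T x y).
Proof.
  unfold Rbar_up; destruct excluded_middle_informative; [| apply Rbar_le_refl].
  now destruct limsup_0.
Qed.

Lemma Rbar_up_of_small_balls_hit (d : R) : 0 < d ->
  (forall r, 0 < r < d -> exists n, hits T x y r n) ->
  Rbar_up T x y = limsup_0 (ratio T x y).
Proof.
  intros Hd Hhit; unfold Rbar_up.
  destruct excluded_middle_informative as [[r [Hr Hnever]]|]; [exfalso | reflexivity].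
  destruct (Hhit (Rmin r (d / 2))) as [n Hn].
  - split; [now apply Rmin_pos; lra | pose proof (Rmin_r r (d / 2)); lra].
  - exact (Hnever n (hits_mono _ _ _ (Rmin_l r (d / 2)) Hn)).
Qed.

Variable (k : R).
Hypothesis (Hk : 0 < k).

Lemma Uk_hits_small_balls : Uk T k x y -> exists d, 0 < d < 1 /\
  forall r, 0 < r < d -> exists n, hits T x y r n /\ INR n <= 2 * Rpower r (- (1 / k)).
Proof.
  intros [_ [i [Hi HU]]].
  assert (Hi1 : 1 <= INR i) by now apply (le_INR 1).
  pose proof (Rmin_l (Rpower (INR i) (- k)) (1 / 2)) as Hdi.
  pose proof (Rmin_r (Rpower (INR i) (- k)) (1 / 2)) as Hd2.
  exists (Rmin (Rpower (INR i) (- k)) (1 / 2)); split.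
  { split; [apply Rmin_pos; [apply Rpower_gt_0 | lra] | lra]. }
  intros r [Hr Hrd].
  set (A := Rpower r (- (1 / k))).
  assert (HA1 : 1 < A).
  { assert (Hlnr : ln r < 0) by (rewrite <- ln_1; apply ln_increasing; lra).
    unfold A, Rpower; rewrite <- exp_0 at 1; apply exp_increasing.
    assert (0 < 1 / k) by (apply Rdiv_lt_0_compat; lra); nra. }
  assert (HiA : INR i < A).
  { apply Rnot_le_lt; intros HAi.
    pose proof (Rpower_opp_le A (INR i) k (Rlt_le _ _ Hk) (conj (Rlt_trans _ _ _ Rlt_0_1 HA1) HAi))
      as Hle.
    unfold A in Hle; rewrite Rpower_root_opp in Hle by assumption; lra. }
  destruct (exists_nat_between A) as [N [HAN HNA]]; [lra |].
  destruct (HU N) as [n [Hn Hball]]; [apply INR_le; lra |].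
  exists n; split.
  - split; [lia |]; unfold inB in *; rewrite Rabs_minus_sym.
    eapply Rlt_trans; [exact Hball |].
    rewrite <- (Rpower_root_opp r k Hr Hk); fold A.
    apply Rpower_opp_lt; lra.
  - pose proof (le_INR n N (proj2 Hn)); lra.
Qed.

Lemma Uk_of_tau_bound (c d : R) : 0 <= y <= 1 -> c * k < 1 -> 0 < d ->
  (forall r, 0 < r < d -> Rbar_le (tau T x y r) (Finite (Rpower r (- c)))) ->
  Uk T k x y.
Proof.
  intros Hy Hck Hd Hbound.
  set (D := Rpower d (- (1 / k))).
  assert (HD : 0 < D) by apply Rpower_gt_0.
  destruct (exists_nat_between (Rmax 2 D)) as [i [Hi _]].
  { pose proof (Rmax_l 2 D); lra. }
  pose proof (Rmax_l 2 D); pose proof (Rmax_r 2 D).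
  split; [exact Hy |]; exists i; split; [apply INR_le; simpl; lra |].
  intros N HiN; pose proof (le_INR i N HiN) as HN.
  set (r := Rpower (INR N) (- k)).
  assert (Hrd : r < d).
  { rewrite <- (Rpower_root_opp d k Hd Hk); fold D.
    apply Rpower_opp_lt; lra. }
  assert (HrN : Rpower r (- c) < INR N).
  { unfold r; rewrite Rpower_mult.
    apply (Rlt_le_trans _ (Rpower (INR N) 1)); [apply Rpower_lt; lra | rewrite Rpower_1; lra]. }
  destruct (tau_lt_hits r (INR N)) as [n [[Hn Hin] HnN]].
  { eapply Rbar_le_lt_trans; [apply Hbound; split; [apply Rpower_gt_0 | exact Hrd] | exact HrN]. }
  apply INR_lt in HnN.
  exists n; split; [lia |].
  unfold inB in *; rewrite Rabs_minus_sym; exact Hin.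
Qed.

Lemma Rbar_up_le_of_Uk : Uk T k x y -> Rbar_le (Rbar_up T x y) (Finite (1 / k)).
Proof.
  intros HU; destruct (Uk_hits_small_balls HU) as [d [Hd Hhit]].
  rewrite (Rbar_up_of_small_balls_hit d) by
    (lra || (intros r Hr; destruct (Hhit r Hr) as [n [Hn _]]; eauto)).
  apply limsup_0_le; intros eps Heps.
  pose proof (Rmin_l d (Rpower 2 (- (1 / eps)))).
  pose proof (Rmin_r d (Rpower 2 (- (1 / eps)))).
  exists (Rmin d (Rpower 2 (- (1 / eps)))); split.
  { apply Rmin_pos; [lra | apply Rpower_gt_0]. }
  intros r [Hr Hrd].
  apply ratio_le_iff; [lra |].
  destruct (Hhit r) as [n [Hn Hnr]]; [lra |].
  eapply Rbar_le_trans; [exact (tau_le_hits r n Hn) |]; simpl.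
  assert (H2 : 2 <= Rpower r (- eps)).
  { rewrite <- (Rpower_root_opp 2 eps) at 1 by lra.
    apply Rpower_opp_le; lra. }
  rewrite Ropp_plus_distr, Rpower_plus.
  pose proof (Rpower_gt_0 r (- (1 / k))); nra.
Qed.

Lemma Uk_of_Rbar_up_lt : 0 <= y <= 1 -> Rbar_lt (Rbar_up T x y) (Finite (1 / k)) -> Uk T k x y.
Proof.
  intros Hy Hlt.
  destruct (limsup_0_lt _ _ (Rbar_le_lt_trans _ _ _ Rbar_up_ge_limsup Hlt))
    as [c [d [Hc [Hd Hratio]]]].
  pose proof (Rmin_l d 1); pose proof (Rmin_r d 1).
  apply (Uk_of_tau_bound c (Rmin d 1)); [exact Hy | | apply Rmin_pos; lra |].
  - apply (Rmult_lt_compat_r k) in Hc; [| exact Hk].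
    replace (1 / k * k) with 1 in Hc by (field; lra); exact Hc.
  - intros r Hr; apply ratio_le_iff; [lra |]; apply Hratio; lra.
Qed.

End Hitting.

Theorem lemma4p2 (T : R -> R) (x kappa : R)
  (HT : expanding_markov T) (Hx : 0 <= x <= 1) (Hk : 0 < kappa) :
  ((forall y, 0 <= y <= 1 -> Rbar_lt (Finite (1 / kappa)) (Rbar_up T x y) -> Bk T kappa x y) /\
   (forall y, Bk T kappa x y -> 0 <= y <= 1 /\ Rbar_le (Finite (1 / kappa)) (Rbar_up T x y))) /\
  ((forall y, 0 <= y <= 1 -> Rbar_lt (Rbar_up T x y) (Finite (1 / kappa)) -> Uk T kappa x y) /\
   (forall y, Uk T kappa x y -> 0 <= y <= 1 /\ Rbar_le (Rbar_up T x y) (Finite (1 / kappa)))).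
Proof.
  split; split.
  - intros y Hy Hlt; split; [exact Hy |]; intros HU.
    exact (Rbar_lt_not_le _ _ Hlt (Rbar_up_le_of_Uk T x y kappa Hk HU)).
  - intros y [Hy HnU]; split; [exact Hy |].
    apply Rbar_not_lt_le; intros Hlt.
    exact (HnU (Uk_of_Rbar_up_lt T x y kappa Hk Hy Hlt)).
  - intros y Hy Hlt; exact (Uk_of_Rbar_up_lt T x y kappa Hk Hy Hlt).
  - intros y HU; split; [apply HU |].
    exact (Rbar_up_le_of_Uk T x y kappa Hk HU).
Qed.
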